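(* Let $X=(\vec x_i)_{i\ge1}$ be a sequence of nonzero points in $[0,1]^k$ and let $B\ge2$ be a constant. Define $\vec v_i:=B^{2^i}\vec x_i/\|\vec x_i\|_1$ for each $i$, and let $\mathcal{D}$ be the distribution that outputs $\vec v_i$ with probability $1/B^{2^i}$ for each $i$ and outputs $\vec 0$ with the remaining probability $1-\sum_{i\ge1}B^{-2^i}$. Then $\mathrm{ARev}(\mathcal{D})\le\mathrm{AlignGap}(X)+1/B$.
   Context: A mechanism $M$ is a set of options $(\vec q,p)$ with $\vec q\in[0,1]^k$, $p\in\mathbb{R}$, always containing the null option $(\vec 0,0)$; a buyer with values $\vec v\in\mathbb{R}^k_{\ge0}$ selects an option maximizing $\vec v\cdot\vec q-p$ (ties broken arbitrarily; a maximizer is assumed to exist), and $\vec q^M(\vec v),p^M(\vec v)$ denote the allocation and price of the selected option. $\mathrm{ARev}(\mathcal{D},M):=\mathbb{E}_{\vec v\sim\mathcal{D}}[p^M(\vec v)\cdot\mathbf 1(\vec v\text{ is parallel to }\vec q^M(\vec v))]$, $\mathrm{ARev}(\mathcal{D}):=\sup_M\mathrm{ARev}(\mathcal{D},M)$. AlignGap: For $X=(\vec x_i)_{i=1}^N$ a sequence of nonzero points in $[0,1]^k$, let $C=(c_i)_{i=0}^N$ be a sequence of reals with $c_0=0$ and $c_i\in[0,1/\|\vec x_i\|_\infty]$ for $i\ge1$; set $\vec x_0:=\vec 0$. Define $\mathrm{sgap}_i^{X,C}:=\min_{0\le j<i}\vec x_i\cdot(c_i\vec x_i-c_j\vec x_j)$,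 $\mathrm{AlignGap}(X,C):=\sum_{i=1}^N \max\{0,\mathrm{sgap}_i^{X,C}\}/\|\vec x_i\|_1$, and $\mathrm{AlignGap}(X):=\sup_C\mathrm{AlignGap}(X,C)$. *)

From HB Require Import structures.
From mathcomp Require Import all_boot all_order all_algebra.
From mathcomp Require Import all_classical all_reals all_analysis.
Set Implicit Arguments. Unset Strict Implicit. Unset Printing Implicit Defensive.
Import Order.TTheory GRing.Theory Num.Theory.
Local Open Scope classical_set_scope.
Local Open Scope ring_scope.

Section Defs.
Variables (R : realType) (k : nat).
Notation vec := 'rV[R]_k.

Definition dotv (u w : vec) : R := \sum_(j < k) u ord0 j * w ord0 j.
Definition norm1 (u : vec) : R := \sum_(j < k) `|u ord0 j|.
Definition normInf (u : vec) : R := \big[Num.max/0]_(j < k) `|u ord0 j|.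

Definition parallel (u w : vec) : Prop :=
  exists a : R, u = a *: w \/ w = a *: u.

Definition option_t := (vec * R)%type.

Definition is_mechanism (M : set option_t) : Prop :=
  M (0, 0) /\ (forall o, M o -> forall j, 0 <= o.1 ord0 j <= 1).

Definition utility (v : vec) (o : option_t) : R := dotv v o.1 - o.2.

Definition is_selection (M : set option_t) (sel : vec -> option_t) : Prop :=
  forall v, M (sel v) /\ (forall o, M o -> utility v o <= utility v (sel v)).

Definition aligned_rev (sel : vec -> option_t) (v : vec) : R :=
  if `[< parallel v (sel v).1 >] then (sel v).2 else 0.

Definition atom_prob (B : R) (i : nat) : R := (B ^+ (2 ^ i))^-1.
Definition atom (B : R) (X : nat -> vec) (i : nat) : vec :=
  (B ^+ (2 ^ i) / norm1 (X i)) *: X i.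
Definition zero_prob (B : R) : R :=
  1 - fine (\sum_(1 <= i <oo) (atom_prob B i)%:E)%E.

(* expectation of g : vec -> R under D (Lebesgue expectation of the discrete
   distribution, written as E[g^+] - E[g^-]) *)
Definition expectD (B : R) (X : nat -> vec) (g : vec -> R) : \bar R :=
  ((\sum_(1 <= i <oo) (atom_prob B i * Num.max 0 (g (atom B X i)))%:E)
   - (\sum_(1 <= i <oo) (atom_prob B i * Num.max 0 (- g (atom B X i)))%:E)
   + (zero_prob B * g 0)%:E)%E.

Definition ARev_sel (B : R) (X : nat -> vec) (sel : vec -> option_t) : \bar R :=
  expectD B X (aligned_rev sel).

Definition ARev (B : R) (X : nat -> vec) : \bar R :=
  ereal_sup [set ARev_sel B X sel | sel in
     [set sel | exists M, is_mechanism M /\ is_selection M sel]].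

Definition xseq (X : nat -> vec) (i : nat) : vec := if i is 0 then 0 else X i.

Definition admissibleC (X : nat -> vec) (C : nat -> R) : Prop :=
  C 0 = 0 /\ forall i, (0 < i)%N -> 0 <= C i <= (normInf (X i))^-1.

Definition sgap (X : nat -> vec) (C : nat -> R) (i : nat) : R :=
  let t j := dotv (xseq X i) (C i *: xseq X i - C j *: xseq X j) in
  \big[Num.min/t 0%N]_(0 <= j < i) t j.

Definition AlignGapC (X : nat -> vec) (C : nat -> R) : \bar R :=
  (\sum_(1 <= i <oo) (Num.max 0 (sgap X C i) / norm1 (X i))%:E)%E.

Definition AlignGap (X : nat -> vec) : \bar R :=
  ereal_sup [set AlignGapC X C | C in admissibleC X].

End Defs.

From HB Require Import structures.
From mathcomp Require Import all_boot all_order all_algebra.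
From mathcomp Require Import all_classical all_reals all_analysis.
From mathcomp Require Import lra zify.
Set Implicit Arguments. Unset Strict Implicit. Unset Printing Implicit Defensive.
Import Order.TTheory GRing.Theory Num.Theory.
Local Open Scope ring_scope.

(* At an aligned atom
   v_i = B^(2^i) x_i / |x_i|_1 the allocation is c_i x_i, and these coefficients
   c_i are admissible for AlignGap.  Prices never exceed values (the null option
   is always available), so an earlier atom j pays at most B^(2^j).  Incentive
   compatibility at v_i against the option chosen at an earlier aligned atom j,
   or against the null option, gives
     B^(-2^i) p_i <= x_i . (c_i x_i - c_j x_j) / |x_i|_1 + B^(2^j - 2^i),
   and the errors B^(2^j - 2^i) <= (2/B) 2^(-i) add up to at most 1/B. *)

Section Vectors.
Context {R : realType} {k : nat}.
Implicit Types (u w : 'rV[R]_k) (c : R).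

Lemma dotvZl c u w : dotv (c *: u) w = c * dotv u w.
Proof. by rewrite /dotv mulr_sumr; apply: eq_bigr => j _; rewrite mxE mulrA. Qed.

Lemma dotvBr u w w' : dotv u (w - w') = dotv u w - dotv u w'.
Proof. by rewrite /dotv -sumrB; apply: eq_bigr => j _; rewrite !mxE mulrBr. Qed.

Lemma dotv0r u : dotv u 0 = 0.
Proof. by rewrite /dotv big1 // => j _; rewrite mxE mulr0. Qed.

Lemma dotv0l u : dotv 0 u = 0.
Proof. by rewrite /dotv big1 // => j _; rewrite mxE mul0r. Qed.

Lemma rV_neq0_entry u : u != 0 -> exists j, u ord0 j != 0.
Proof.
move=> /eqP u_neq0; apply/not_existsP => u_eq0; apply: u_neq0.
by apply/rowP => j; rewrite mxE; have := u_eq0 j; case: eqP.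
Qed.

Lemma dotv_self_gt0 u : u != 0 -> 0 < dotv u u.
Proof.
move=> /rV_neq0_entry[j uj_neq0]; rewrite /dotv (bigD1 j) //=.
apply: ltr_pwDl; first by rewrite -expr2 exprn_even_gt0.
by apply: sumr_ge0 => l _; rewrite -expr2 sqr_ge0.
Qed.

Lemma norm1_gt0 u : u != 0 -> 0 < norm1 u.
Proof.
move=> /rV_neq0_entry[j uj_neq0]; rewrite /norm1 (bigD1 j) //=.
by apply: ltr_pwDl; rewrite ?normr_gt0 ?sumr_ge0.
Qed.

Lemma normInf_ge0 u : 0 <= normInf u.
Proof. exact: bigmax_ge_id. Qed.

Lemma dotv_le_norm1 u w : (forall j, 0 <= u ord0 j) ->
  (forall j, 0 <= w ord0 j <= 1) -> dotv u w <= norm1 u.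
Proof.
move=> u_ge0 w_cube; apply: ler_sum => j _; rewrite ger0_norm //.
by have /andP[w_ge0 w_le1] := w_cube j; rewrite ler_piMr.
Qed.

Lemma parallelZ_multiple c u w : c != 0 -> u != 0 ->
  parallel (c *: u) w -> exists c', w = c' *: u.
Proof.
move=> c_neq0 u_neq0 [a [cu_eq|w_eq]]; last by exists (a * c); rewrite w_eq scalerA.
have a_neq0 : a != 0.
  apply/eqP => a_eq0; move: cu_eq; rewrite a_eq0 scale0r => /eqP.
  by rewrite scaler_eq0 (negbTE c_neq0) (negbTE u_neq0).
by exists (a^-1 * c); rewrite -scalerA cu_eq scalerA mulVf ?scale1r.
Qed.

Lemma scale_cube_coef_le c u : (forall j, 0 <= u ord0 j) -> u != 0 ->
  (forall j, 0 <= (c *: u) ord0 j <= 1) -> 0 <= c <= (normInf u)^-1.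
Proof.
move=> u_ge0 /rV_neq0_entry[j uj_neq0] cu_cube.
have uj_gt0 : 0 < u ord0 j by rewrite lt_def uj_neq0 u_ge0.
have c_ge0 : 0 <= c.
  by have /andP[+ _] := cu_cube j; rewrite mxE pmulr_lge0.
rewrite c_ge0 /=; have [->|c_neq0] := eqVneq c 0; first by rewrite invr_ge0 normInf_ge0.
have c_gt0 : 0 < c by rewrite lt_def c_neq0.
have normInf_gt0 : 0 < normInf u.
  by apply: lt_le_trans (le_bigmax _ _ j); rewrite normr_gt0.
rewrite -(ler_pM2l normInf_gt0) mulfV ?gt_eqF // -ler_pdivlMr // div1r.
apply: bigmax_le; first by rewrite invr_ge0 ltW.
move=> l _; rewrite ger0_norm // -(ler_pM2l c_gt0) mulfV ?gt_eqF //.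
by have /andP[_] := cu_cube l; rewrite mxE.
Qed.

End Vectors.

Lemma nneseries_le_sums (R : realType) (f : nat -> R) (c : R) :
  (forall i, 0 <= f i) -> (forall n, \sum_(1 <= i < n) f i <= c) ->
  (\sum_(1 <= i <oo) (f i)%:E <= c%:E)%E.
Proof.
move=> f_ge0 sums_le; apply: lime_le.
  by apply: is_cvg_nneseries => n _ _; rewrite lee_fin.
by near=> n; rewrite sumEFin lee_fin.
Unshelve. all: by end_near.
Qed.

Section AtomWeights.
Context {R : realType}.

Lemma sum_inv_pow2 n : \sum_(1 <= i < n.+1) ((2 : R) ^+ i)^-1 = 1 - (2 ^+ n)^-1.
Proof.
elim: n => [|n IHn]; first by rewrite big_geq // expr0 invr1 subrr.
by rewrite big_nat_recr //= IHn exprS invfM; lra.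
Qed.

Lemma sum_inv_pow2_le1 n : \sum_(1 <= i < n) ((2 : R) ^+ i)^-1 <= 1.
Proof.
case: n => [|n]; first by rewrite big_geq.
by rewrite sum_inv_pow2 gerBl invr_ge0 exprn_ge0.
Qed.

Context (B : R) (B_ge2 : 2 <= B).

Lemma B_gt0 : 0 < B. Proof. by have := B_ge2; lra. Qed.

Lemma pow2_le_expr n : 2 ^+ n <= B ^+ n.
Proof. by apply: lerXn2r; rewrite ?nnegrE ?ler0n ?(ltW B_gt0). Qed.

Lemma mul_pow2_le_expr n : B * 2 ^+ n.+1 <= 2 * B ^+ n.+1.
Proof. by rewrite !exprS mulrCA !ler_pM2l ?pow2_le_expr ?B_gt0. Qed.

Lemma expr_pow2_ratio_le i j : (j < i)%N ->
  B ^+ (2 ^ j) / B ^+ (2 ^ i) <= 2 / B / 2 ^+ i.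
Proof.
case: i => // i j_lt.
have [m i_le_m ->] : exists2 m, (i.+1 <= m)%N & (2 ^ i.+1 = 2 ^ j + m)%N.
  exists (2 ^ i.+1 - 2 ^ j)%N; last by rewrite subnKC // leq_exp2l // ltnW.
  have := ltn_expl i (ltnSn 1); have : (2 ^ j <= 2 ^ i)%N by rewrite leq_exp2l.
  rewrite expnS; lia.
have Bm_ge : B * 2 ^+ i.+1 <= 2 * B ^+ m.
  apply: le_trans (mul_pow2_le_expr i) _; rewrite ler_pM2l // ler_weXn2l //.
  by apply: le_trans B_ge2; rewrite ler1n.
have B_neq0 : B != 0 by rewrite gt_eqF ?B_gt0.
rewrite exprD invfM mulrA divff ?expf_neq0 // mul1r -mulrA -invfM.
by rewrite ler_pdivlMr ?mulr_gt0 ?exprn_gt0 ?B_gt0 // mulrC ler_pdivrMr ?exprn_gt0 ?B_gt0.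
Qed.

Lemma atom_prob_gt0 i : 0 < atom_prob B i.
Proof. by rewrite invr_gt0 exprn_gt0 ?B_gt0. Qed.

Lemma atom_prob_le_inv_pow2 i : atom_prob B i <= (2 ^+ i)^-1.
Proof.
rewrite lef_pV2 ?posrE ?exprn_gt0 ?B_gt0 //.
apply: le_trans (pow2_le_expr i) (ler_weXn2l _ (ltnW (ltn_expl i (ltnSn 1)))).
by apply: le_trans B_ge2; rewrite ler1n.
Qed.

Lemma zero_prob_ge0 : 0 <= zero_prob B.
Proof.
have atom_prob_sum_le1 : (\sum_(1 <= i <oo) (atom_prob B i)%:E <= 1%:E)%E.
  apply: nneseries_le_sums => [i|n]; first exact/ltW/atom_prob_gt0.
  apply: le_trans (sum_inv_pow2_le1 n); apply: ler_sum => i _.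
  exact: atom_prob_le_inv_pow2.
have : (0 <= \sum_(1 <= i <oo) (atom_prob B i)%:E)%E.
  by apply: nneseries_ge0 => i _ _; rewrite lee_fin (ltW (atom_prob_gt0 i)).
by rewrite /zero_prob subr_ge0; case: (\sum_(1 <= i <oo) _)%E atom_prob_sum_le1.
Qed.

(* Bound on B^(2^j - 2^i) for an earlier atom 1 <= j < i; atom 1 only competes
   against the null option, so it carries no error. *)
Definition align_err i : R := if (1 < i)%N then 2 / B / 2 ^+ i else 0.

Lemma align_err_ge0 i : 0 <= align_err i.
Proof.
by rewrite /align_err; case: ifP => // _; rewrite !divr_ge0 ?exprn_ge0 ?(ltW B_gt0).
Qed.

Lemma sum_align_err_le n : \sum_(1 <= i < n) align_err i <= B^-1.
Proof.
have [n_le1|n_gt1] := leqP n 1; first by rewrite big_geq // invr_ge0 (ltW B_gt0).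
rewrite big_ltn // {1}/align_err ltnn add0r.
rewrite (eq_big_nat _ _ (F2 := fun i => 2 / B * (2 ^+ i)^-1)); last first.
  by move=> i /andP[i_gt1 _]; rewrite /align_err i_gt1.
have tail_le : \sum_(2 <= i < n) (2 ^+ i)^-1 <= 2^-1 :> R.
  by have := sum_inv_pow2_le1 n; rewrite big_ltn // expr1; lra.
rewrite -mulr_sumr; apply: le_trans (ler_wpM2l _ tail_le) _.
  by rewrite divr_ge0 ?(ltW B_gt0).
by rewrite mulrAC divff ?mul1r.
Qed.

End AtomWeights.

Lemma sgap_ge (R : realType) (k : nat) (X : nat -> 'rV[R]_k) (C : nat -> R) i K :
  (0 < i)%N ->
  (forall j, (j < i)%N -> K <= dotv (xseq X i) (C i *: xseq X i - C j *: xseq X j)) ->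
  K <= sgap X C i.
Proof.
move=> i_gt0 K_le; rewrite /sgap big_nat_cond.
apply: (big_ind (fun m => K <= m)); first exact: K_le.
  by move=> x y Kx Ky; rewrite le_min Kx Ky.
by move=> j /andP[/andP[_ j_lt] _]; exact: K_le.
Qed.

Lemma xseq_gt0 (R : realType) (k : nat) (X : nat -> 'rV[R]_k) i :
  (0 < i)%N -> xseq X i = X i.
Proof. by case: i. Qed.

Section Mechanism.
Context {R : realType} {k : nat} (M : set (option_t R k)) (sel : 'rV[R]_k -> option_t R k).
Hypotheses (M_mech : is_mechanism M) (sel_M : is_selection M sel).

Lemma sel_price_le_value v : (sel v).2 <= dotv v (sel v).1.
Proof.
have [_ /(_ _ M_mech.1)] := sel_M v.
by rewrite /utility /= dotv0r subr0 subr_ge0.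
Qed.

Lemma sel_alloc_cube v j : 0 <= (sel v).1 ord0 j <= 1.
Proof. exact: M_mech.2 _ (sel_M v).1 j. Qed.

Lemma aligned_rev0_le0 : aligned_rev sel 0 <= 0.
Proof.
rewrite /aligned_rev asboolT; last by exists 0; left; rewrite scale0r.
by apply: le_trans (sel_price_le_value 0) _; rewrite dotv0l.
Qed.

Section Atoms.
Context (X : nat -> 'rV[R]_k) (B : R).
Hypotheses (X_cube : forall i, (0 < i)%N -> X i != 0 /\ (forall j, 0 <= X i ord0 j <= 1))
  (B_ge2 : 2 <= B).

Local Notation alloc i := (sel (atom B X i)).1.
Local Notation price i := (sel (atom B X i)).2.

Definition aligned i : Prop := (0 < i)%N /\ parallel (atom B X i) (alloc i).

Definition align_coef i : R :=
  if `[< aligned i >] then dotv (alloc i) (X i) / dotv (X i) (X i) else 0.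

Lemma X_ge0 i j : (0 < i)%N -> 0 <= X i ord0 j.
Proof. by move=> /X_cube[_ /(_ j) /andP[]]. Qed.

Lemma norm1_X_gt0 i : (0 < i)%N -> 0 < norm1 (X i).
Proof. by move=> /X_cube[X_neq0 _]; rewrite norm1_gt0. Qed.

Lemma atom_scale_gt0 i : (0 < i)%N -> 0 < B ^+ (2 ^ i) / norm1 (X i).
Proof. by move=> i_gt0; rewrite divr_gt0 ?norm1_X_gt0 ?exprn_gt0 ?(B_gt0 B_ge2). Qed.

Lemma atom_price_le i : (0 < i)%N -> price i <= B ^+ (2 ^ i).
Proof.
move=> i_gt0; apply: le_trans (sel_price_le_value _) _.
rewrite dotvZl -[leRHS](divfK (lt0r_neq0 (norm1_X_gt0 i_gt0))).
rewrite ler_pM2l ?atom_scale_gt0 //.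
by apply: dotv_le_norm1 => [j|]; [exact: X_ge0 | exact: sel_alloc_cube].
Qed.

Lemma aligned_allocE i : aligned i -> alloc i = align_coef i *: X i.
Proof.
move=> [i_gt0 par]; have X_neq0 := (X_cube i_gt0).1.
have [c alloc_eq] := parallelZ_multiple (lt0r_neq0 (atom_scale_gt0 i_gt0)) X_neq0 par.
rewrite /align_coef asboolT ?alloc_eq ?dotvZl ?mulfK //.
exact/lt0r_neq0/dotv_self_gt0.
Qed.

Lemma align_coef_admissible : admissibleC X align_coef.
Proof.
split=> [|i i_gt0]; first by rewrite /align_coef asboolF // => -[].
have [al_i|not_al] := pselect (aligned i); last first.
  by rewrite /align_coef asboolF // lexx invr_ge0 normInf_ge0.
have [X_neq0 _] := X_cube i_gt0.
apply: scale_cube_coef_le X_neq0 _ => [j|j]; first exact: X_ge0.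
by rewrite -aligned_allocE //; exact: sel_alloc_cube.
Qed.

Lemma competing_option i j : (j < i)%N ->
  exists o, [/\ M o, o.1 = align_coef j *: xseq X j
                 & atom_prob B i * o.2 <= align_err B i].
Proof.
move=> j_lt; have [al_j|not_al] := pselect (aligned j); last first.
  exists (0, 0); split=> /=; first exact: M_mech.1.
    by rewrite /align_coef asboolF // scale0r.
  by rewrite mulr0 align_err_ge0.
exists (sel (atom B X j)); split; first exact: (sel_M _).1.
  by rewrite xseq_gt0 ?aligned_allocE //; case: al_j.
rewrite /align_err (leq_ltn_trans al_j.1 j_lt).
apply: le_trans (expr_pow2_ratio_le B_ge2 j_lt); rewrite mulrC ler_wpM2r //.
  by rewrite invr_ge0 exprn_ge0 // (ltW (B_gt0 B_ge2)).
by rewrite atom_price_le //; case: al_j.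
Qed.

Lemma aligned_price_le i j : aligned i -> (j < i)%N ->
  atom_prob B i * price i - align_err B i
  <= dotv (xseq X i) (align_coef i *: xseq X i - align_coef j *: xseq X j) / norm1 (X i).
Proof.
move=> al_i j_lt; have i_gt0 := al_i.1.
have [opt [M_opt opt_alloc opt_price]] := competing_option j_lt.
set b := B ^+ (2 ^ i); set n := norm1 (X i).
have b_gt0 : 0 < b by rewrite exprn_gt0 ?(B_gt0 B_ge2).
have sel_IC : b / n * dotv (X i) opt.1 - opt.2 <= b / n * dotv (X i) (alloc i) - price i.
  by rewrite -!dotvZl; exact: (sel_M _).2 opt M_opt.
rewrite xseq_gt0 // -aligned_allocE // -opt_alloc dotvBr.
have price_le : b^-1 * price i
    <= (dotv (X i) (alloc i) - dotv (X i) opt.1) / n + b^-1 * opt.2.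
  rewrite -(ler_pM2l b_gt0) mulrDr !mulVKf ?gt_eqF // mulrA mulrAC mulrBr.
  lra.
by rewrite /atom_prob -/b in opt_price *; lra.
Qed.

Lemma atom_term_le i : (0 < i)%N ->
  atom_prob B i * Num.max 0 (aligned_rev sel (atom B X i))
  <= Num.max 0 (sgap X align_coef i) / norm1 (X i) + align_err B i.
Proof.
move=> i_gt0; have n_gt0 := norm1_X_gt0 i_gt0.
have gap_ge0 : 0 <= Num.max 0 (sgap X align_coef i) / norm1 (X i).
  by rewrite divr_ge0 ?le_max ?lexx ?(ltW n_gt0).
have err_ge0 := align_err_ge0 B_ge2 i.
rewrite /aligned_rev; have [par|not_par] := pselect (parallel (atom B X i) (alloc i));
  last by rewrite asboolF // maxxx mulr0 addr_ge0.
rewrite asboolT //; case: (leP (price i) 0) => [_|_]; first by rewrite mulr0 addr_ge0.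
have sgap_bound : (atom_prob B i * price i - align_err B i) * norm1 (X i)
    <= sgap X align_coef i.
  apply: (sgap_ge i_gt0) => j j_lt; rewrite -ler_pdivlMr //.
  exact: aligned_price_le (conj i_gt0 par) j_lt.
suff : atom_prob B i * price i - align_err B i
    <= Num.max 0 (sgap X align_coef i) / norm1 (X i) by lra.
by rewrite ler_pdivlMr //; apply: le_trans sgap_bound _; rewrite le_max lexx orbT.
Qed.

Lemma ARev_sel_le : (ARev_sel B X sel <= AlignGapC X align_coef + (B^-1)%:E)%E.
Proof.
rewrite /ARev_sel /expectD.
set pos := (\sum_(1 <= i <oo) _)%E; set neg := (\sum_(1 <= i <oo) _)%E.
have term_ge0 i (y : R) : 0 <= atom_prob B i * Num.max 0 y.
  by rewrite mulr_ge0 ?le_max ?lexx ?(ltW (atom_prob_gt0 B_ge2 i)).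
have neg_ge0 : (0 <= neg)%E by apply: nneseries_ge0 => i _ _; rewrite lee_fin.
have zero_le0 : ((zero_prob B * aligned_rev sel 0)%:E <= 0)%E.
  by rewrite lee_fin mulr_ge0_le0 ?zero_prob_ge0 ?aligned_rev0_le0.
have pos_le : (pos <= \sum_(1 <= i <oo)
    ((Num.max 0 (sgap X align_coef i) / norm1 (X i))%:E + (align_err B i)%:E))%E.
  rewrite /pos eseries_cond [leRHS]eseries_cond; apply: lee_nneseries.
    by move=> i _ _; rewrite lee_fin.
  by move=> i /= i_gt0; rewrite -EFinD lee_fin atom_term_le.
apply: le_trans (geeDl _ zero_le0) _; rewrite -[leRHS]sube0.
apply: leeB neg_ge0; apply: le_trans pos_le _; rewrite nneseriesD; last 2 first.
- by move=> i i_gt0 _; rewrite lee_fin divr_ge0 ?le_max ?lexx ?(ltW (norm1_X_gt0 i_gt0)).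
- by move=> i _ _; rewrite lee_fin align_err_ge0.
apply: leeD2l; apply: nneseries_le_sums; first exact: align_err_ge0.
exact: sum_align_err_le.
Qed.

End Atoms.
End Mechanism.

Theorem propositionC1 (R : realType) (k : nat) (X : nat -> 'rV[R]_k) (B : R)
  (hX : forall i, (0 < i)%N -> X i != 0 /\ (forall j, 0 <= X i ord0 j <= 1))
  (hB : 2 <= B) :
  (ARev B X <= AlignGap X + (B^-1)%:E)%E.
Proof.
apply: ge_ereal_sup => _ [sel [M [M_mech sel_M]] <-].
apply: (le_trans (ARev_sel_le M_mech sel_M hX hB)); rewrite leeD2r //.
apply: ereal_sup_ubound; exists (align_coef sel X B) => //.
exact: (align_coef_admissible M_mech sel_M hX hB).
Qed.
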